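(* The pair $(\tau_1,\tau_2)$ on $H^2_{\mathbb D^2}$ does not have any non-trivial joint reducing subspace.
   Context: $H^2_{\mathbb D^2}$ is the Hardy space of the bidisc with orthonormal basis $\{z_1^{m_1}z_2^{m_2}\}_{m_1,m_2\ge0}$; $M_{z_1},M_{z_2}$ are the coordinate multiplication operators. $U$ is the unitary on $H^2_{\mathbb D^2}$ with $U(z_1^{m_1}z_2^{m_2})=z_1^{m_1+2}z_2^{m_2}$ if $m_1\ge m_2$, $=z_1^{m_1+1}z_2^{m_2-1}$ if $m_1+1=m_2$, $=z_1^{m_1}z_2^{m_2-2}$ if $m_1+2\le m_2$; $\tau_1=U^*M_{z_1}$, $\tau_2=M_{z_2}U$. A non-trivial joint reducing subspace is a closed subspace, different from $\{0\}$ and the whole space, reducing both operators. *)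

From Stdlib Require Import Reals Lia.
From Coquelicot Require Import Coquelicot.
Open Scope R_scope.

(* H^2 of the bidisc is identified, via its orthonormal basis
   e_(m1,m2) = z1^m1 z2^m2, with the space of square-summable complex
   coefficient families f : nat*nat -> C  (f (m1,m2) = <h, z1^m1 z2^m2>). *)
Definition vec := (nat * nat)%type -> C.

Fixpoint rsum (N : nat) (g : nat -> R) : R :=
  match N with O => 0 | S n => rsum n g + g n end.
Fixpoint csum (N : nat) (g : nat -> C) : C :=
  match N with O => 0%C | S n => Cplus (csum n g) (g n) end.

Definition rsq (N : nat) (h : (nat * nat)%type -> R) : R :=
  rsum N (fun i => rsum N (fun j => h (i, j))).
Definition csq (N : nat) (h : (nat * nat)%type -> C) : C :=
  csum N (fun i => csum N (fun j => h (i, j))).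

Definition l2 (f : vec) : Prop :=
  exists M : R, forall N, rsq N (fun p => Cmod (f p) ^ 2) <= M.

Definition l2conv (fn : nat -> vec) (f : vec) : Prop :=
  forall eps : R, 0 < eps -> exists K, forall n N, (K <= n)%nat ->
    rsq N (fun p => Cmod (fn n p - f p)%C ^ 2) <= eps.

Definition orth (f g : vec) : Prop :=
  is_lim_seq (fun N => Cmod (csq N (fun p => (f p * Cconj (g p))%C))) 0.

Definition zero_vec : vec := fun _ => 0%C.

Definition closed_subspace (S : vec -> Prop) : Prop :=
  (forall f, S f -> l2 f) /\
  S zero_vec /\
  (forall f g, S f -> S g -> S (fun p => (f p + g p)%C)) /\
  (forall (c : C) f, S f -> S (fun p => (c * f p)%C)) /\
  (forall fn f, (forall n, S (fn n)) -> l2 f -> l2conv fn f -> S f).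

Definition ortho_compl (S : vec -> Prop) : vec -> Prop :=
  fun g => l2 g /\ forall f, S f -> orth f g.

Definition invariant (T : vec -> vec) (S : vec -> Prop) : Prop :=
  forall f, S f -> S (T f).

Definition reduces (T : vec -> vec) (S : vec -> Prop) : Prop :=
  invariant T S /\ invariant T (ortho_compl S).

(* multiplication by z1, z2 (action on coefficients) *)
Definition Mz1 (f : vec) : vec := fun p =>
  match p with (O, _) => 0%C | (S k, m2) => f (k, m2) end.
Definition Mz2 (f : vec) : vec := fun p =>
  match p with (_, O) => 0%C | (m1, S k) => f (m1, k) end.

(* the basis permutation: U (z1^m1 z2^m2) = z1^(fst (sigma m)) z2^(snd (sigma m)) *)
Definition sigma (m : nat * nat) : nat * nat :=
  let (m1, m2) := m in
  if Nat.leb m2 m1 then (m1 + 2, m2)%nat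
  else if Nat.eqb (m1 + 1) m2 then (m1 + 1, m2 - 1)%nat
  else (m1, m2 - 2)%nat.

Definition sigma_inv (n : nat * nat) : nat * nat :=
  let (a, b) := n in
  if Nat.leb (b + 2) a then (a - 2, b)%nat
  else if Nat.eqb a (b + 1) then (a - 1, b + 1)%nat
  else (a, b + 2)%nat.

Lemma sigma_invK : forall n, sigma (sigma_inv n) = n.
Proof.
  intros [a b]; unfold sigma_inv, sigma.
  destruct (Nat.leb (b+2) a) eqn:H1.
  - apply Nat.leb_le in H1.
    replace (Nat.leb b (a-2)) with true by (symmetry; apply Nat.leb_le; lia).
    f_equal; lia.
  - apply Nat.leb_gt in H1. destruct (Nat.eqb a (b+1)) eqn:H2.
    + apply Nat.eqb_eq in H2.
      replace (Nat.leb (b+1) (a-1)) with false by (symmetry; apply Nat.leb_gt; lia).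
      replace (Nat.eqb (a-1+1) (b+1)) with true by (symmetry; apply Nat.eqb_eq; lia).
      f_equal; lia.
    + apply Nat.eqb_neq in H2.
      replace (Nat.leb (b+2) a) with false by (symmetry; apply Nat.leb_gt; lia).
      replace (Nat.eqb (a+1) (b+2)) with false by (symmetry; apply Nat.eqb_neq; lia).
      f_equal; lia.
Qed.

Lemma sigmaK : forall m, sigma_inv (sigma m) = m.
Proof.
  intros [m1 m2]; unfold sigma_inv, sigma.
  destruct (Nat.leb m2 m1) eqn:H1.
  - apply Nat.leb_le in H1.
    replace (Nat.leb (m2+2) (m1+2)) with true by (symmetry; apply Nat.leb_le; lia).
    f_equal; lia.
  - apply Nat.leb_gt in H1. destruct (Nat.eqb (m1+1) m2) eqn:H2.
    + apply Nat.eqb_eq in H2.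
      replace (Nat.leb (m2-1+2) (m1+1)) with false by (symmetry; apply Nat.leb_gt; lia).
      replace (Nat.eqb (m1+1) (m2-1+1)) with true by (symmetry; apply Nat.eqb_eq; lia).
      f_equal; lia.
    + apply Nat.eqb_neq in H2.
      replace (Nat.leb (m2-2+2) m1) with false by (symmetry; apply Nat.leb_gt; lia).
      replace (Nat.eqb m1 (m2-2+1)) with false by (symmetry; apply Nat.eqb_neq; lia).
      f_equal; lia.
Qed.

(* U (sum f_m e_m) = sum f_m e_(sigma m), i.e. (U f)(n) = f (sigma^-1 n);
   U^* = U^-1 : (U^* f)(m) = f (sigma m). *)
Definition Uop (f : vec) : vec := fun n => f (sigma_inv n).
Definition Uadj (f : vec) : vec := fun m => f (sigma m).

Definition tau1 (f : vec) : vec := Uadj (Mz1 f).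
Definition tau2 (f : vec) : vec := Mz2 (Uop f).

(* Let P be the orthogonal projection onto S.  Since S reduces tau1 and tau2, P
   commutes with both.  On the basis, tau1 e_m = e_(idx1 m) and tau2 e_m = e_(idx2 m),
   where idx1 misses exactly the indices (0, k+2) and idx2 exactly the indices (a, 0).
   Hence the hermitian matrix <P e_m, e_n> is invariant under (m, n) |-> (idx_i m, idx_i n),
   and its entries vanish when m lies in the range of idx_i and n does not.  Since
   idx2 (idx1 (a, b)) = (a+1, b+1), every off-diagonal pair descends to one on the boundary
   of N x N, where these vanishing rules apply; so P is diagonal.  The diagonal is constant
   because idx1 and idx2 connect every index to (0, 0); thus P = c I with c = c^2, i.e.
   P = 0 or P = I.  The projection itself is built from a minimizing sequence, which is
   Cauchy by the parallelogram law. *)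

From Pilot Require Import Defs.
From Stdlib Require Import Reals Lia Lra Psatz FunctionalExtensionality ClassicalEpsilon Classical.
From Coquelicot Require Import Coquelicot.
Open Scope R_scope.

Lemma rsum_ext N g h : (forall i, (i < N)%nat -> g i = h i) -> rsum N g = rsum N h.
Proof.
  induction N as [|N IH]; intros H; simpl; [reflexivity|].
  rewrite IH by (intros; apply H; lia). rewrite H by lia. reflexivity.
Qed.

Lemma rsum_plus N g h : rsum N (fun i => g i + h i) = rsum N g + rsum N h.
Proof. induction N as [|N IH]; simpl; [lra|]. rewrite IH; ring. Qed.

Lemma rsum_scal N c g : rsum N (fun i => c * g i) = c * rsum N g.
Proof. induction N as [|N IH]; simpl; [lra|]. rewrite IH; ring. Qed.

Lemma rsum_le N g h : (forall i, g i <= h i) -> rsum N g <= rsum N h.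
Proof. intros H; induction N as [|N IH]; simpl; [lra|]. specialize (H N); lra. Qed.

Lemma rsum_nonneg N g : (forall i, 0 <= g i) -> 0 <= rsum N g.
Proof. intros H; induction N as [|N IH]; simpl; [lra|]. specialize (H N); lra. Qed.

Lemma rsum_zero N g : (forall i, (i < N)%nat -> g i = 0) -> rsum N g = 0.
Proof.
  intros H; induction N as [|N IH]; simpl; [reflexivity|].
  rewrite IH by (intros; apply H; lia). rewrite H by lia. ring.
Qed.

Lemma rsum_le_mono N M g : (forall i, 0 <= g i) -> (N <= M)%nat -> rsum N g <= rsum M g.
Proof. intros H HNM; induction HNM as [|M _ IH]; simpl; [lra|]. specialize (H M); lra. Qed.

Lemma rsum_single N g k : (k < N)%nat -> (forall i, i <> k -> g i = 0) -> rsum N g = g k.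
Proof.
  intros Hk H; induction N as [|N IH]; simpl; [lia|].
  destruct (Nat.eq_dec N k) as [->|Hne].
  - rewrite rsum_zero by (intros; apply H; lia); ring.
  - rewrite IH, (H N Hne) by lia; ring.
Qed.

Lemma rsum_term_le N g k : (forall i, 0 <= g i) -> (k < N)%nat -> g k <= rsum N g.
Proof.
  intros H Hk; induction N as [|N IH]; simpl; [lia|].
  pose proof (H N). pose proof (rsum_nonneg N g H).
  destruct (Nat.eq_dec N k) as [->|Hne]; [lra|].
  specialize (IH ltac:(lia)); lra.
Qed.

Lemma is_lim_seq_rsum N (g : nat -> nat -> R) (l : nat -> R) :
  (forall i, is_lim_seq (fun n => g n i) (l i)) ->
  is_lim_seq (fun n => rsum N (g n)) (rsum N l).
Proof.
  intros H; induction N as [|N IH]; simpl.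
  - apply is_lim_seq_const.
  - exact (is_lim_seq_plus' _ _ _ _ IH (H N)).
Qed.

Lemma fst_csum N g : fst (csum N g) = rsum N (fun i => fst (g i)).
Proof. induction N as [|N IH]; simpl; [reflexivity|]. rewrite IH; reflexivity. Qed.

Lemma snd_csum N g : snd (csum N g) = rsum N (fun i => snd (g i)).
Proof. induction N as [|N IH]; simpl; [reflexivity|]. rewrite IH; reflexivity. Qed.

Lemma rsq_ext_lt N h g :
  (forall p, (fst p < N)%nat -> (snd p < N)%nat -> h p = g p) -> rsq N h = rsq N g.
Proof.
  intros H. apply rsum_ext; intros i Hi. apply rsum_ext; intros j Hj. apply H; assumption.
Qed.

Lemma rsq_ext N h g : (forall p, h p = g p) -> rsq N h = rsq N g.
Proof. intros H. apply rsq_ext_lt; auto. Qed.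

Lemma rsq_plus N h g : rsq N (fun p => h p + g p) = rsq N h + rsq N g.
Proof. unfold rsq. rewrite <- rsum_plus. apply rsum_ext; intros. apply rsum_plus. Qed.

Lemma rsq_scal N c h : rsq N (fun p => c * h p) = c * rsq N h.
Proof. unfold rsq. rewrite <- rsum_scal. apply rsum_ext; intros. apply rsum_scal. Qed.

Lemma rsq_minus N h g : rsq N (fun p => h p - g p) = rsq N h - rsq N g.
Proof.
  rewrite (rsq_ext N _ (fun p => h p + -1 * g p)) by (intros; ring).
  rewrite rsq_plus, rsq_scal; ring.
Qed.

Lemma rsq_zero N h : (forall p, h p = 0) -> rsq N h = 0.
Proof. intros H. apply rsum_zero; intros. apply rsum_zero; auto. Qed.

Lemma rsq_le N h g : (forall p, h p <= g p) -> rsq N h <= rsq N g.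
Proof. intros H. apply rsum_le; intros. apply rsum_le; auto. Qed.

Lemma rsq_nonneg N h : (forall p, 0 <= h p) -> 0 <= rsq N h.
Proof. intros H. apply rsum_nonneg; intros. apply rsum_nonneg; auto. Qed.

Lemma rsq_le_mono N M h : (forall p, 0 <= h p) -> (N <= M)%nat -> rsq N h <= rsq M h.
Proof.
  intros H HNM. apply Rle_trans with (rsum N (fun i => rsum M (fun j => h (i, j)))).
  - apply rsum_le; intros. apply rsum_le_mono; auto.
  - apply rsum_le_mono; auto. intros; apply rsum_nonneg; auto.
Qed.

Lemma rsq_single N h p : (fst p < N)%nat -> (snd p < N)%nat ->
  (forall q, q <> p -> h q = 0) -> rsq N h = h p.
Proof.
  destruct p as [a b]; simpl; intros Ha Hb H. unfold rsq.
  rewrite (rsum_single N _ a Ha).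
  - apply (rsum_single N (fun j => h (a, j))); auto. intros j Hj; apply H; congruence.
  - intros i Hi; apply rsum_zero; intros j _; apply H; congruence.
Qed.

Lemma rsq_term_le N h p : (forall q, 0 <= h q) ->
  (fst p < N)%nat -> (snd p < N)%nat -> h p <= rsq N h.
Proof.
  destruct p as [a b]; simpl; intros H Ha Hb.
  apply Rle_trans with (rsum N (fun j => h (a, j))).
  - apply (rsum_term_le N (fun j => h (a, j))); auto.
  - apply (rsum_term_le N (fun i => rsum N (fun j => h (i, j)))); auto.
    intros; apply rsum_nonneg; auto.
Qed.

Lemma is_lim_seq_rsq N (g : nat -> (nat * nat)%type -> R) (l : (nat * nat)%type -> R) :
  (forall p, is_lim_seq (fun n => g n p) (l p)) ->
  is_lim_seq (fun n => rsq N (g n)) (rsq N l).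
Proof.
  intros H. apply (is_lim_seq_rsum N (fun n i => rsum N (fun j => g n (i, j)))).
  intros i. apply (is_lim_seq_rsum N (fun n j => g n (i, j))). auto.
Qed.

Lemma fst_csq N h : fst (csq N h) = rsq N (fun p => fst (h p)).
Proof. unfold csq, rsq. rewrite fst_csum. apply rsum_ext; intros. apply fst_csum. Qed.

Lemma snd_csq N h : snd (csq N h) = rsq N (fun p => snd (h p)).
Proof. unfold csq, rsq. rewrite snd_csum. apply rsum_ext; intros. apply snd_csum. Qed.

Lemma is_lim_seq_le_const u (l c : R) K :
  is_lim_seq u l -> (forall n, (K <= n)%nat -> u n <= c) -> l <= c.
Proof.
  intros Hu H. apply (is_lim_seq_le_loc u (fun _ => c) l c); [exists K; auto | auto |].
  apply is_lim_seq_const.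
Qed.

Lemma is_lim_seq_ge_const u (l c : R) K :
  is_lim_seq u l -> (forall n, (K <= n)%nat -> c <= u n) -> c <= l.
Proof.
  intros Hu H. apply (is_lim_seq_le_loc (fun _ => c) u c l); [exists K; auto | | auto].
  apply is_lim_seq_const.
Qed.

Lemma is_lim_seq_unique_real u (l1 l2 : R) : is_lim_seq u l1 -> is_lim_seq u l2 -> l1 = l2.
Proof.
  intros H1 H2. apply is_lim_seq_unique in H1, H2. rewrite H1 in H2. now injection H2.
Qed.

Lemma is_lim_seq_0_abs_le u v :
  (forall n, Rabs (u n) <= v n) -> is_lim_seq v 0 -> is_lim_seq u 0.
Proof.
  intros H Hv. apply is_lim_seq_le_le with (u := fun n => - v n) (w := v); auto.
  - intros n; specialize (H n); apply Rabs_le_between in H; lra.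
  - replace (Finite 0) with (Rbar_opp 0) by (simpl; f_equal; ring).
    apply -> is_lim_seq_opp; exact Hv.
Qed.

Definition inv_succ (n : nat) : R := / (INR n + 1).

Lemma inv_succ_pos n : 0 < inv_succ n.
Proof. unfold inv_succ. apply Rinv_0_lt_compat. pose proof (pos_INR n); lra. Qed.

Lemma inv_succ_le n k : (k <= n)%nat -> inv_succ n <= inv_succ k.
Proof.
  intros H. unfold inv_succ. apply le_INR in H. pose proof (pos_INR k).
  apply Rinv_le_contravar; lra.
Qed.

Lemma inv_succ_small eps : 0 < eps -> exists K, inv_succ K < eps.
Proof.
  intros H. destruct (archimed_cor1 eps H) as [N [H1 H2]]. exists N.
  eapply Rle_lt_trans; [|exact H1]. unfold inv_succ.
  apply Rinv_le_contravar; [apply lt_0_INR; exact H2 | lra].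
Qed.

Lemma ex_finite_lim_seq_cauchy_rate u :
  (forall n k, (u n - u k) ^ 2 <= 2 * inv_succ n + 2 * inv_succ k) -> ex_finite_lim_seq u.
Proof.
  intros H. apply ex_lim_seq_cauchy_corr. intros [eps Heps]; simpl.
  assert (He2 : 0 < eps ^ 2 / 4) by (apply Rdiv_lt_0_compat; nra).
  destruct (inv_succ_small _ He2) as [K HK]. exists K. intros n m Hn Hm.
  specialize (H n m). pose proof (inv_succ_le _ _ Hn). pose proof (inv_succ_le _ _ Hm).
  apply Rabs_def1; nra.
Qed.

Definition Csqmod (z : C) : R := fst z ^ 2 + snd z ^ 2.

Lemma Csqmod_nonneg z : 0 <= Csqmod z.
Proof. unfold Csqmod; nra. Qed.

Lemma Cmod_pow2 z : Cmod z ^ 2 = Csqmod z.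
Proof. unfold Cmod, Csqmod. rewrite pow2_sqrt; [reflexivity | nra]. Qed.

Lemma Csqmod_sub w z : Csqmod (w - z)%C = (fst w - fst z) ^ 2 + (snd w - snd z) ^ 2.
Proof. unfold Csqmod; simpl; ring. Qed.

Lemma Csqmod_mult a z : Csqmod (a * z)%C = Csqmod a * Csqmod z.
Proof. unfold Csqmod; simpl; ring. Qed.

Lemma Csqmod_plus_le w z : Csqmod (w + z)%C <= 2 * Csqmod w + 2 * Csqmod z.
Proof.
  destruct w as [a b], z as [c d]; unfold Csqmod; simpl.
  pose proof (pow2_ge_0 (a - c)); pose proof (pow2_ge_0 (b - d)); nra.
Qed.

Definition vsub (f g : vec) : vec := fun p => (f p - g p)%C.
Definition vscal (c : C) (f : vec) : vec := fun p => (c * f p)%C.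
Definition vlin (a : C) (f : vec) (b : C) (g : vec) : vec := fun p => (a * f p + b * g p)%C.

Definition norm2 (N : nat) (f : vec) : R := rsq N (fun p => Csqmod (f p)).

Lemma norm2_nonneg N f : 0 <= norm2 N f.
Proof. apply rsq_nonneg; intros; apply Csqmod_nonneg. Qed.

Lemma norm2_le_mono N M f : (N <= M)%nat -> norm2 N f <= norm2 M f.
Proof. intros; apply rsq_le_mono; auto; intros; apply Csqmod_nonneg. Qed.

Lemma Csqmod_le_norm2 N f p : (fst p < N)%nat -> (snd p < N)%nat -> Csqmod (f p) <= norm2 N f.
Proof. intros; apply (rsq_term_le N (fun q => Csqmod (f q))); auto; intros; apply Csqmod_nonneg. Qed.

Lemma Csqmod_le_norm2_box f p : Csqmod (f p) <= norm2 (S (max (fst p) (snd p))) f.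
Proof. apply Csqmod_le_norm2; lia. Qed.

Lemma l2_iff_norm2_bounded f : l2 f <-> exists M, forall N, norm2 N f <= M.
Proof.
  assert (E : forall N, rsq N (fun p => Cmod (f p) ^ 2) = norm2 N f)
    by (intros; apply rsq_ext; intros; apply Cmod_pow2).
  unfold l2; split; intros [M H]; exists M; intros N; specialize (H N); rewrite E in *; exact H.
Qed.

Lemma l2_vlin a f b g : l2 f -> l2 g -> l2 (vlin a f b g).
Proof.
  rewrite !l2_iff_norm2_bounded. intros [M1 H1] [M2 H2].
  exists (2 * Csqmod a * M1 + 2 * Csqmod b * M2). intros N.
  apply Rle_trans with (rsq N (fun p => 2 * Csqmod a * Csqmod (f p) + 2 * Csqmod b * Csqmod (g p))).
  - apply rsq_le; intros p. unfold vlin.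
    pose proof (Csqmod_plus_le (a * f p) (b * g p)).
    rewrite !Csqmod_mult in *; lra.
  - rewrite rsq_plus, !rsq_scal. specialize (H1 N); specialize (H2 N); unfold norm2 in *.
    pose proof (Csqmod_nonneg a); pose proof (Csqmod_nonneg b); nra.
Qed.

Lemma vsub_vlin f g : vsub f g = vlin 1 f (-1) g.
Proof. apply functional_extensionality; intros p; unfold vsub, vlin; ring. Qed.

Lemma l2_vsub f g : l2 f -> l2 g -> l2 (vsub f g).
Proof. rewrite vsub_vlin; apply l2_vlin. Qed.

Lemma l2_vscal c f : l2 f -> l2 (vscal c f).
Proof.
  intros H. replace (vscal c f) with (vlin c f 0 f)
    by (apply functional_extensionality; intros p; unfold vscal, vlin; ring).
  apply l2_vlin; assumption.
Qed.

(** Junk value unless [l2 f]. *)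
Definition l2norm2 (f : vec) : R := real (Lim_seq (fun N => norm2 N f)).

Lemma is_lim_seq_norm2 f : l2 f -> is_lim_seq (fun N => norm2 N f) (l2norm2 f).
Proof.
  rewrite l2_iff_norm2_bounded. intros [M HM].
  destruct (ex_finite_lim_seq_incr (fun N => norm2 N f) M) as [l Hl];
    [intros; apply norm2_le_mono; lia | exact HM |].
  unfold l2norm2. rewrite (is_lim_seq_unique _ _ Hl). exact Hl.
Qed.

Lemma norm2_le_l2norm2 f N : l2 f -> norm2 N f <= l2norm2 f.
Proof.
  intros H. apply (is_lim_seq_ge_const _ _ _ N (is_lim_seq_norm2 f H)).
  intros; apply norm2_le_mono; auto.
Qed.

Lemma l2norm2_le f c : l2 f -> (forall N, norm2 N f <= c) -> l2norm2 f <= c.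
Proof. intros H Hc. apply (is_lim_seq_le_const _ _ _ 0 (is_lim_seq_norm2 f H)); auto. Qed.

Lemma l2norm2_nonneg f : l2 f -> 0 <= l2norm2 f.
Proof. intros H. apply Rle_trans with (norm2 0 f); [apply norm2_nonneg | apply norm2_le_l2norm2, H]. Qed.

(** Real and imaginary parts of the partial inner product [csq N (fun p => f p * Cconj (g p))]. *)
Definition re_ip (N : nat) (f g : vec) : R :=
  rsq N (fun p => fst (f p) * fst (g p) + snd (f p) * snd (g p)).
Definition im_ip (N : nat) (f g : vec) : R :=
  rsq N (fun p => snd (f p) * fst (g p) - fst (f p) * snd (g p)).

Lemma orth_iff f g :
  orth f g <-> is_lim_seq (fun N => re_ip N f g) 0 /\ is_lim_seq (fun N => im_ip N f g) 0.
Proof.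
  set (z := fun N => csq N (fun p => (f p * Cconj (g p))%C)).
  assert (Ere : forall N, fst (z N) = re_ip N f g)
    by (intros; unfold z; rewrite fst_csq; apply rsq_ext; intros; simpl; ring).
  assert (Eim : forall N, snd (z N) = im_ip N f g)
    by (intros; unfold z; rewrite snd_csq; apply rsq_ext; intros; simpl; ring).
  unfold orth; fold z; split.
  - intros H; split; refine (is_lim_seq_0_abs_le _ _ _ H); intros N; simpl;
      [rewrite <- Ere | rewrite <- Eim]; eapply Rle_trans; try apply Rmax_Cmod;
      [apply Rmax_l | apply Rmax_r].
  - intros [Hre Him].
    apply (is_lim_seq_0_abs_le _ (fun N => sqrt 2 * (Rabs (re_ip N f g) + Rabs (im_ip N f g)))).
    + intros N. rewrite Rabs_pos_eq by apply Cmod_ge_0. rewrite <- Ere, <- Eim.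
      fold (z N). eapply Rle_trans; [apply Cmod_2Rmax|]. apply Rmult_le_compat_l; [apply sqrt_pos|].
      apply Rmax_lub; pose proof (Rabs_pos (fst (z N))); pose proof (Rabs_pos (snd (z N))); lra.
    + replace 0 with (sqrt 2 * (0 + 0)) by ring.
      apply is_lim_seq_abs in Hre, Him. simpl in Hre, Him. rewrite Rabs_R0 in Hre, Him.
      exact (is_lim_seq_scal_l _ (sqrt 2) _ (is_lim_seq_plus' _ _ _ _ Hre Him)).
Qed.

Definition index_eq_dec (p q : nat * nat) : {p = q} + {p <> q}.
Proof. decide equality; apply Nat.eq_dec. Defined.

Definition basis (m : nat * nat) : vec := fun p => if index_eq_dec p m then 1%C else 0%C.

Lemma basis_same m : basis m m = 1%C.
Proof. unfold basis. destruct (index_eq_dec m m); [reflexivity | contradiction]. Qed.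

Lemma basis_other m p : p <> m -> basis m p = 0%C.
Proof. intros H. unfold basis. destruct (index_eq_dec p m); [contradiction | reflexivity]. Qed.

Lemma norm2_basis N m : (fst m < N)%nat -> (snd m < N)%nat -> norm2 N (basis m) = 1.
Proof.
  intros H1 H2. unfold norm2. rewrite (rsq_single N _ m H1 H2).
  - rewrite basis_same. unfold Csqmod; simpl; ring.
  - intros q Hq. rewrite basis_other by exact Hq. unfold Csqmod; simpl; ring.
Qed.

Lemma l2_basis m : l2 (basis m).
Proof.
  apply l2_iff_norm2_bounded. exists 1. intros N.
  set (K := S (max N (max (fst m) (snd m)))).
  rewrite <- (norm2_basis K m) by lia. apply norm2_le_mono; lia.
Qed.

Lemma re_ip_sub_r N f g h : re_ip N f (vsub g h) = re_ip N f g - re_ip N f h.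
Proof. unfold re_ip. rewrite <- rsq_minus. apply rsq_ext; intros; simpl; ring. Qed.

Lemma im_ip_sub_r N f g h : im_ip N f (vsub g h) = im_ip N f g - im_ip N f h.
Proof. unfold im_ip. rewrite <- rsq_minus. apply rsq_ext; intros; simpl; ring. Qed.

Lemma re_ip_comm N f g : re_ip N f g = re_ip N g f.
Proof. apply rsq_ext; intros; ring. Qed.

Lemma im_ip_comm N f g : im_ip N f g = - im_ip N g f.
Proof.
  rewrite <- (Rmult_1_l (im_ip N g f)), Ropp_mult_distr_l. unfold im_ip. rewrite <- rsq_scal.
  apply rsq_ext; intros; ring.
Qed.

Lemma re_ip_diag N f : re_ip N f f = norm2 N f.
Proof. apply rsq_ext; intros; unfold Csqmod; ring. Qed.

Lemma im_ip_diag N f : im_ip N f f = 0.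
Proof. apply rsq_zero; intros; ring. Qed.

Lemma re_ip_basis_r N f n : (fst n < N)%nat -> (snd n < N)%nat -> re_ip N f (basis n) = fst (f n).
Proof.
  intros H1 H2. unfold re_ip. rewrite (rsq_single N _ n H1 H2).
  - rewrite basis_same; simpl; ring.
  - intros q Hq; rewrite basis_other by exact Hq; simpl; ring.
Qed.

Lemma im_ip_basis_r N f n : (fst n < N)%nat -> (snd n < N)%nat -> im_ip N f (basis n) = snd (f n).
Proof.
  intros H1 H2. unfold im_ip. rewrite (rsq_single N _ n H1 H2).
  - rewrite basis_same; simpl; ring.
  - intros q Hq; rewrite basis_other by exact Hq; simpl; ring.
Qed.

(** [<f, e_n - g> = 0] says that [<f, g>] is the coordinate [f n]. *)
Lemma orth_basis_sub f g n : orth f (vsub (basis n) g) ->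
  is_lim_seq (fun N => re_ip N f g) (fst (f n)) /\ is_lim_seq (fun N => im_ip N f g) (snd (f n)).
Proof.
  rewrite orth_iff. intros [Hre Him].
  assert (Hbox : eventually (fun N => (fst n < N)%nat /\ (snd n < N)%nat))
    by (exists (S (max (fst n) (snd n))); intros; lia).
  split.
  - apply is_lim_seq_ext_loc with (fun N => fst (f n) - re_ip N f (vsub (basis n) g)).
    + revert Hbox; apply filter_imp; intros N [H1 H2].
      rewrite re_ip_sub_r, re_ip_basis_r by assumption; ring.
    + pose proof (is_lim_seq_minus' _ _ _ _ (is_lim_seq_const (fst (f n))) Hre) as L.
      rewrite Rminus_0_r in L; exact L.
  - apply is_lim_seq_ext_loc with (fun N => snd (f n) - im_ip N f (vsub (basis n) g)).
    + revert Hbox; apply filter_imp; intros N [H1 H2].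
      rewrite im_ip_sub_r, im_ip_basis_r by assumption; ring.
    + pose proof (is_lim_seq_minus' _ _ _ _ (is_lim_seq_const (snd (f n))) Him) as L.
      rewrite Rminus_0_r in L; exact L.
Qed.

Lemma orth_basis f n : orth f (basis n) -> f n = 0%C.
Proof.
  intros H. replace (basis n) with (vsub (basis n) zero_vec) in H
    by (apply functional_extensionality; intros p; unfold vsub, zero_vec; ring).
  apply orth_basis_sub in H as [Hre Him].
  apply injective_projections; simpl;
    [apply (is_lim_seq_unique_real _ _ _ Hre) | apply (is_lim_seq_unique_real _ _ _ Him)];
    apply (is_lim_seq_ext (fun _ => 0)); try apply is_lim_seq_const;
    intros; symmetry; apply rsq_zero; intros; unfold zero_vec; simpl; ring.
Qed.

Lemma norm2_vscal N c f : norm2 N (vscal c f) = Csqmod c * norm2 N f.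
Proof. unfold norm2. rewrite <- rsq_scal. apply rsq_ext; intros; apply Csqmod_mult. Qed.

Lemma orth_scaled_basis c n :
  orth (vscal c (basis n)) (vsub (basis n) (vscal c (basis n))) -> c = 0%C \/ c = 1%C.
Proof.
  intros H. apply orth_basis_sub in H as [Hre Him].
  assert (Ec : vscal c (basis n) n = c) by (unfold vscal; rewrite basis_same; ring).
  rewrite Ec in Hre, Him.
  assert (Hc : is_lim_seq (fun N => re_ip N (vscal c (basis n)) (vscal c (basis n))) (Csqmod c)).
  { apply is_lim_seq_ext_loc with (fun _ => Csqmod c); [|apply is_lim_seq_const].
    exists (S (max (fst n) (snd n))); intros N HN.
    rewrite re_ip_diag, norm2_vscal, norm2_basis by lia; ring. }
  assert (Hre' := is_lim_seq_unique_real _ _ _ Hre Hc).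
  assert (Him' : snd c = 0).
  { apply (is_lim_seq_unique_real _ _ _ Him).
    apply (is_lim_seq_ext (fun _ => 0)); [intros; symmetry; apply im_ip_diag | apply is_lim_seq_const]. }
  unfold Csqmod in Hre'. rewrite Him' in Hre'.
  destruct c as [x y]; simpl in *; subst y.
  assert (x * (x - 1) = 0) by nra.
  destruct (Rmult_integral _ _ H) as [Hx | Hx]; [left | right];
    apply injective_projections; simpl; lra.
Qed.

(** * Orthogonal projections *)

Lemma closed_subspace_vlin S a f b g : closed_subspace S -> S f -> S g -> S (vlin a f b g).
Proof. intros (_ & _ & Hadd & Hscal & _) Hf Hg. apply Hadd; apply Hscal; assumption. Qed.

Lemma closed_subspace_vsub S f g : closed_subspace S -> S f -> S g -> S (vsub f g).
Proof. rewrite vsub_vlin. apply closed_subspace_vlin. Qed.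

Lemma norm2_parallelogram N x s t :
  norm2 N (vsub s t) = 2 * norm2 N (vsub x s) + 2 * norm2 N (vsub x t)
                       - 4 * norm2 N (vsub x (vlin (/ 2) s (/ 2) t)).
Proof.
  unfold norm2. rewrite <- !rsq_scal, <- rsq_plus, <- rsq_minus.
  apply rsq_ext; intros; unfold vsub, vlin, Csqmod; simpl; field.
Qed.

Lemma re_ip_polarization N f g :
  re_ip N f g = (norm2 N f + norm2 N g - norm2 N (vsub g f)) / 2.
Proof.
  unfold norm2, re_ip. rewrite <- rsq_plus, <- rsq_minus.
  unfold Rdiv; rewrite Rmult_comm, <- rsq_scal.
  apply rsq_ext; intros; unfold vsub, Csqmod; simpl; field.
Qed.

Lemma im_ip_polarization N f g :
  im_ip N f g = (norm2 N (vsub g (vscal Ci f)) - norm2 N f - norm2 N g) / 2.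
Proof.
  unfold norm2, im_ip. rewrite <- !rsq_minus.
  unfold Rdiv; rewrite Rmult_comm, <- rsq_scal.
  apply rsq_ext; intros; unfold vsub, vscal, Csqmod; simpl; field.
Qed.

Lemma norm2_sub_scal N b c t :
  norm2 N (vsub b (vscal c t)) =
  norm2 N b - 2 * fst c * re_ip N t b + 2 * snd c * im_ip N t b + Csqmod c * norm2 N t.
Proof.
  unfold norm2, re_ip, im_ip. rewrite <- !rsq_scal, <- rsq_minus, <- !rsq_plus.
  apply rsq_ext; intros; unfold vsub, vscal, Csqmod; simpl; ring.
Qed.

Lemma norm2_lim_0_zero v : is_lim_seq (fun N => norm2 N v) 0 -> v = zero_vec.
Proof.
  intros H. apply functional_extensionality; intros p.
  assert (Hp : Csqmod (v p) <= 0).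
  { apply Rle_trans with (norm2 (S (max (fst p) (snd p))) v); [apply Csqmod_le_norm2_box|].
    apply (is_lim_seq_ge_const _ _ _ (S (max (fst p) (snd p))) H).
    intros; apply norm2_le_mono; assumption. }
  unfold Csqmod in Hp. unfold zero_vec.
  apply injective_projections; simpl; nra.
Qed.

Definition pw_cvg (sn : nat -> vec) (s : vec) : Prop :=
  forall p, is_lim_seq (fun n => fst (sn n p)) (fst (s p)) /\
            is_lim_seq (fun n => snd (sn n p)) (snd (s p)).

Lemma is_lim_seq_Csqmod (u : nat -> C) (z : C) :
  is_lim_seq (fun n => fst (u n)) (fst z) -> is_lim_seq (fun n => snd (u n)) (snd z) ->
  is_lim_seq (fun n => Csqmod (u n)) (Csqmod z).
Proof.
  intros H1 H2. unfold Csqmod.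
  replace (fst z ^ 2 + snd z ^ 2) with (fst z * fst z + snd z * snd z) by ring.
  apply (is_lim_seq_ext (fun n => fst (u n) * fst (u n) + snd (u n) * snd (u n))); [intros; ring|].
  apply is_lim_seq_plus'; apply is_lim_seq_mult'; assumption.
Qed.

Lemma is_lim_seq_norm2_pw N y sn s :
  pw_cvg sn s -> is_lim_seq (fun n => norm2 N (vsub y (sn n))) (norm2 N (vsub y s)).
Proof.
  intros H. apply (is_lim_seq_rsq N (fun n p => Csqmod (vsub y (sn n) p))). intros p.
  destruct (H p) as [H1 H2]. apply is_lim_seq_Csqmod; unfold vsub; simpl;
    apply is_lim_seq_minus'; try apply is_lim_seq_const; assumption.
Qed.

Lemma norm2_pw_limit_le N y sn s c K : pw_cvg sn s ->
  (forall k, (K <= k)%nat -> norm2 N (vsub y (sn k)) <= c) -> norm2 N (vsub y s) <= c.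
Proof. intros H. apply is_lim_seq_le_const, is_lim_seq_norm2_pw, H. Qed.

Lemma pw_cvg_cauchy_rate sn :
  (forall n k N, norm2 N (vsub (sn n) (sn k)) <= 2 * inv_succ n + 2 * inv_succ k) ->
  exists s, pw_cvg sn s.
Proof.
  intros H.
  assert (Hp : forall p n k, Csqmod (vsub (sn n) (sn k) p) <= 2 * inv_succ n + 2 * inv_succ k)
    by (intros; eapply Rle_trans; [apply Csqmod_le_norm2_box | apply H]).
  assert (Hfst : forall p, ex_finite_lim_seq (fun n => fst (sn n p))).
  { intros p; apply ex_finite_lim_seq_cauchy_rate; intros n k.
    specialize (Hp p n k); unfold vsub in Hp; rewrite Csqmod_sub in Hp.
    pose proof (pow2_ge_0 (snd (sn n p) - snd (sn k p))); lra. }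
  assert (Hsnd : forall p, ex_finite_lim_seq (fun n => snd (sn n p))).
  { intros p; apply ex_finite_lim_seq_cauchy_rate; intros n k.
    specialize (Hp p n k); unfold vsub in Hp; rewrite Csqmod_sub in Hp.
    pose proof (pow2_ge_0 (fst (sn n p) - fst (sn k p))); lra. }
  exists (fun p => (real (Lim_seq (fun n => fst (sn n p))), real (Lim_seq (fun n => snd (sn n p))))).
  intros p; simpl. destruct (Hfst p) as [l1 L1], (Hsnd p) as [l2 L2].
  rewrite (is_lim_seq_unique _ _ L1), (is_lim_seq_unique _ _ L2). split; assumption.
Qed.

Lemma exists_inf_approx {T : Type} (P : T -> Prop) (D : T -> R) (t0 : T) :
  P t0 -> (forall t, P t -> 0 <= D t) ->
  exists d, (forall t, P t -> d <= D t) /\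
            (forall eps, 0 < eps -> exists t, P t /\ D t < d + eps).
Proof.
  intros H0 Hpos.
  destruct (completeness (fun r => exists t, P t /\ r = - D t)) as [l [Hub Hlub]].
  - exists 0. intros r [t [Ht ->]]. specialize (Hpos t Ht). lra.
  - exists (- D t0); eauto.
  - exists (- l). split.
    + intros t Ht. assert (- D t <= l) by (apply Hub; eauto). lra.
    + intros eps He. apply NNPP; intros Hn. assert (l <= l - eps); [|lra].
      apply Hlub. intros r [t [Ht ->]].
      destruct (Rlt_le_dec (D t) (- l + eps)); [exfalso; eauto | lra].
Qed.

Lemma quadratic_nonneg_zero X Y T : 0 <= T ->
  (forall l1 l2, 0 <= - 2 * l1 * X + 2 * l2 * Y + (l1 ^ 2 + l2 ^ 2) * T) -> X = 0 /\ Y = 0.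
Proof.
  intros HT H. set (r := / (T + 1)).
  assert (Hr : 0 < r) by (apply Rinv_0_lt_compat; lra).
  assert (HrT : r * T < 1) by (unfold r; apply (Rmult_lt_reg_l (T + 1)); [lra | field_simplify; lra]).
  specialize (H (r * X) (- r * Y)).
  (* with [l = r (X, -Y)] the form equals [r (X^2 + Y^2) (r T - 2)] *)
  assert (HQ : 0 <= r * ((X ^ 2 + Y ^ 2) * (r * T - 2))) by nra.
  rewrite <- (Rmult_0_r r) in HQ. apply Rmult_le_reg_l in HQ; [|exact Hr].
  pose proof (pow2_ge_0 X); pose proof (pow2_ge_0 Y).
  assert (X ^ 2 + Y ^ 2 <= 0) by nra.
  split; nra.
Qed.

Lemma l2norm2_parallelogram x s t : l2 x -> l2 s -> l2 t ->
  l2norm2 (vsub s t) = 2 * l2norm2 (vsub x s) + 2 * l2norm2 (vsub x t)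
                       - 4 * l2norm2 (vsub x (vlin (/ 2) s (/ 2) t)).
Proof.
  intros Hx Hs Ht. apply (is_lim_seq_unique_real (fun N => norm2 N (vsub s t))).
  - apply is_lim_seq_norm2, l2_vsub; assumption.
  - apply (is_lim_seq_ext _ _ _ (fun N => eq_sym (norm2_parallelogram N x s t))).
    apply is_lim_seq_minus'; [apply is_lim_seq_plus'|]; apply (is_lim_seq_scal_l _ _ (Finite _));
      apply is_lim_seq_norm2, l2_vsub, l2_vlin || apply is_lim_seq_norm2, l2_vsub; assumption.
Qed.

Lemma ex_lim_ip f g : l2 f -> l2 g -> exists X Y : R,
  is_lim_seq (fun N => re_ip N f g) X /\ is_lim_seq (fun N => im_ip N f g) Y.
Proof.
  intros Hf Hg.
  exists ((l2norm2 f + l2norm2 g - l2norm2 (vsub g f)) / 2),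
         ((l2norm2 (vsub g (vscal Ci f)) - l2norm2 f - l2norm2 g) / 2).
  split.
  - apply (is_lim_seq_ext _ _ _ (fun N => eq_sym (re_ip_polarization N f g))).
    apply (is_lim_seq_scal_r _ _ (Finite _)).
    apply is_lim_seq_minus'; [apply is_lim_seq_plus'|]; apply is_lim_seq_norm2;
      auto using l2_vsub.
  - apply (is_lim_seq_ext _ _ _ (fun N => eq_sym (im_ip_polarization N f g))).
    apply (is_lim_seq_scal_r _ _ (Finite _)).
    apply is_lim_seq_minus'; [apply is_lim_seq_minus'|]; apply is_lim_seq_norm2;
      auto using l2_vsub, l2_vscal.
Qed.

Lemma l2norm2_sub_scal b c t (X Y : R) : l2 b -> l2 t ->
  is_lim_seq (fun N => re_ip N t b) X -> is_lim_seq (fun N => im_ip N t b) Y ->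
  l2norm2 (vsub b (vscal c t)) = l2norm2 b - 2 * fst c * X + 2 * snd c * Y + Csqmod c * l2norm2 t.
Proof.
  intros Hb Ht LX LY. apply (is_lim_seq_unique_real (fun N => norm2 N (vsub b (vscal c t)))).
  - apply is_lim_seq_norm2, l2_vsub; [exact Hb | apply l2_vscal, Ht].
  - apply (is_lim_seq_ext _ _ _ (fun N => eq_sym (norm2_sub_scal N b c t))).
    apply is_lim_seq_plus'; [apply is_lim_seq_plus'; [apply is_lim_seq_minus'|]|];
      try apply (is_lim_seq_scal_l _ _ (Finite _)); try apply is_lim_seq_norm2; assumption.
Qed.

Definition proj (S : vec -> Prop) (x : vec) : vec :=
  epsilon (inhabits zero_vec) (fun a => S a /\ ortho_compl S (vsub x a)).

Section Projection.

Variable V : vec -> Prop.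
Hypothesis HV : closed_subspace V.

Let V_l2 f : V f -> l2 f.
Proof. apply HV. Qed.

Lemma minimizing_seq_cauchy x d (sn : nat -> vec) : l2 x ->
  (forall s, V s -> d <= l2norm2 (vsub x s)) -> (forall n, V (sn n)) ->
  (forall n, l2norm2 (vsub x (sn n)) < d + inv_succ n) ->
  forall n k N, norm2 N (vsub (sn n) (sn k)) <= 2 * inv_succ n + 2 * inv_succ k.
Proof.
  intros Hx Hd HVn Hn n k N.
  assert (Hmid := Hd _ (closed_subspace_vlin V (/ 2) (sn n) (/ 2) (sn k) HV (HVn n) (HVn k))).
  pose proof (Hn n); pose proof (Hn k).
  pose proof (l2norm2_parallelogram x (sn n) (sn k) Hx (V_l2 _ (HVn n)) (V_l2 _ (HVn k))).
  pose proof (norm2_le_l2norm2 (vsub (sn n) (sn k)) N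
                (l2_vsub _ _ (V_l2 _ (HVn n)) (V_l2 _ (HVn k)))).
  lra.
Qed.

Lemma closed_subspace_pw_limit (sn : nat -> vec) s : (forall n, V (sn n)) -> pw_cvg sn s ->
  (forall n k N, norm2 N (vsub (sn n) (sn k)) <= 2 * inv_succ n + 2 * inv_succ k) -> V s.
Proof.
  intros HVn Hs Hc.
  assert (Hbound : forall n N, norm2 N (vsub (sn n) s) <= 4 * inv_succ n).
  { intros n N. apply (norm2_pw_limit_le N (sn n) sn s _ n Hs).
    intros k Hk. pose proof (Hc n k N); pose proof (inv_succ_le _ _ Hk); lra. }
  assert (Hl2 : l2 s).
  { replace s with (vsub (sn 0%nat) (vsub (sn 0%nat) s))
      by (apply functional_extensionality; intros p; unfold vsub; ring).
    apply l2_vsub; [apply V_l2, HVn|].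
    apply l2_iff_norm2_bounded; exists (4 * inv_succ 0); apply Hbound. }
  destruct HV as (_ & _ & _ & _ & Hclosed). apply (Hclosed sn); [exact HVn | exact Hl2 |].
  intros eps Heps. destruct (inv_succ_small (eps / 4)) as [K HK]; [lra|].
  exists K; intros n N Hn.
  rewrite (rsq_ext N _ (fun p => Csqmod (vsub (sn n) s p))) by (intros; apply Cmod_pow2).
  pose proof (Hbound n N); pose proof (inv_succ_le _ _ Hn). unfold norm2 in *. lra.
Qed.

Lemma exists_dist_minimizer x : l2 x ->
  exists a, V a /\ forall s, V s -> l2norm2 (vsub x a) <= l2norm2 (vsub x s).
Proof.
  intros Hx.
  destruct (exists_inf_approx V (fun s => l2norm2 (vsub x s)) zero_vec) as [d [Hd Happrox]].
  - apply HV.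
  - intros s Hs. apply l2norm2_nonneg, l2_vsub, V_l2; assumption.
  - destruct (choice (fun n s => V s /\ l2norm2 (vsub x s) < d + inv_succ n)) as [sn Hsn].
    { intros n. apply Happrox, inv_succ_pos. }
    assert (HVn : forall n, V (sn n)) by apply Hsn.
    assert (Hc := minimizing_seq_cauchy x d sn Hx Hd HVn (fun n => proj2 (Hsn n))).
    destruct (pw_cvg_cauchy_rate sn Hc) as [a Ha].
    assert (HVa : V a) by exact (closed_subspace_pw_limit sn a HVn Ha Hc).
    exists a; split; [exact HVa|]. intros s Hs. apply Rle_trans with d; [|apply Hd, Hs].
    apply l2norm2_le; [apply l2_vsub, V_l2; assumption|]. intros N.
    apply le_epsilon; intros eps Heps. destruct (inv_succ_small eps Heps) as [K HK].
    apply (norm2_pw_limit_le N x sn a _ K Ha). intros k Hk.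
    pose proof (norm2_le_l2norm2 (vsub x (sn k)) N (l2_vsub _ _ Hx (V_l2 _ (HVn k)))).
    pose proof (proj2 (Hsn k)); pose proof (inv_succ_le _ _ Hk). lra.
Qed.

Lemma dist_minimizer_orth x a : l2 x -> V a ->
  (forall s, V s -> l2norm2 (vsub x a) <= l2norm2 (vsub x s)) -> ortho_compl V (vsub x a).
Proof.
  intros Hx Ha Hmin. set (b := vsub x a).
  assert (Hb : l2 b) by (apply l2_vsub, V_l2; assumption).
  split; [exact Hb|]. intros t Ht. assert (Hlt := V_l2 t Ht).
  destruct (ex_lim_ip t b Hlt Hb) as (X & Y & LX & LY).
  enough (X = 0 /\ Y = 0) as [-> ->] by (apply orth_iff; split; assumption).
  apply (quadratic_nonneg_zero X Y (l2norm2 t)); [apply l2norm2_nonneg, Hlt|].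
  intros l1 l2.
  assert (E : vsub x (vlin 1 a (l1, l2) t) = vsub b (vscal (l1, l2) t))
    by (apply functional_extensionality; intros p; unfold b, vsub, vlin, vscal; ring).
  pose proof (Hmin _ (closed_subspace_vlin V 1 a (l1, l2) t HV Ha Ht)) as Hm.
  rewrite E, (l2norm2_sub_scal b (l1, l2) t X Y Hb Hlt LX LY) in Hm.
  fold b in Hm. unfold Csqmod in Hm; simpl in Hm. lra.
Qed.

Lemma proj_spec x : l2 x -> V (proj V x) /\ ortho_compl V (vsub x (proj V x)).
Proof.
  intros Hx. unfold proj. apply epsilon_spec.
  destruct (exists_dist_minimizer x Hx) as [a [Ha Hmin]].
  exists a. split; [exact Ha | apply dist_minimizer_orth; assumption].
Qed.

Lemma orth_decomposition_unique x a a' : V a -> V a' ->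
  ortho_compl V (vsub x a) -> ortho_compl V (vsub x a') -> a = a'.
Proof.
  intros Ha Ha' [_ Horth] [_ Horth'].
  set (v := vsub a a').
  assert (Hv : V v) by (apply closed_subspace_vsub; assumption).
  destruct (proj1 (orth_iff _ _) (Horth v Hv)) as [L _].
  destruct (proj1 (orth_iff _ _) (Horth' v Hv)) as [L' _].
  assert (Hz : v = zero_vec).
  { apply norm2_lim_0_zero.
    apply (is_lim_seq_ext (fun N => re_ip N v (vsub x a') - re_ip N v (vsub x a))).
    - intros N. rewrite <- re_ip_sub_r, <- re_ip_diag. f_equal.
      apply functional_extensionality; intros p; unfold v, vsub; ring.
    - replace 0 with (0 - 0) by ring. apply is_lim_seq_minus'; assumption. }
  apply functional_extensionality; intros p.
  assert (Hp : v p = 0%C) by (rewrite Hz; reflexivity).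
  unfold v, vsub in Hp. rewrite <- (Cplus_0_l (a' p)), <- Hp. ring.
Qed.

Lemma proj_unique x a : l2 x -> V a -> ortho_compl V (vsub x a) -> proj V x = a.
Proof.
  intros Hx Ha Horth. destruct (proj_spec x Hx) as [Hp Hporth].
  exact (orth_decomposition_unique x _ _ Hp Ha Hporth Horth).
Qed.

End Projection.

Lemma proj_comm_reducing V T x : closed_subspace V -> reduces T V ->
  (forall f g, T (vsub f g) = vsub (T f) (T g)) -> l2 x -> l2 (T x) ->
  proj V (T x) = T (proj V x).
Proof.
  intros HV [HTV HTperp] HTsub Hx HTx. destruct (proj_spec V HV x Hx) as [Hp Hperp].
  apply proj_unique; auto. rewrite <- HTsub. apply HTperp, Hperp.
Qed.

(** * Closed subspaces containing the basis *)

Definition trunc (K J : nat) (f : vec) : vec :=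
  fun p => if andb (Nat.ltb (fst p) K) (Nat.ltb (snd p) J) then f p else 0%C.

Definition row_trunc (K J : nat) (f : vec) : vec :=
  fun p => if andb (Nat.eqb (fst p) K) (Nat.ltb (snd p) J) then f p else 0%C.

Lemma norm2_trunc_sub_le n N f : l2 f -> norm2 N (vsub (trunc n n f) f) <= l2norm2 f - norm2 n f.
Proof.
  intros Hf.
  assert (E : norm2 N (vsub (trunc n n f) f) = norm2 N f - norm2 N (trunc n n f)).
  { unfold norm2. rewrite <- rsq_minus. apply rsq_ext; intros p.
    unfold vsub, trunc. destruct (andb _ _); unfold Csqmod; simpl; ring. }
  assert (Hin : forall M, (M <= n)%nat -> norm2 M (trunc n n f) = norm2 M f).
  { intros M HM. apply rsq_ext_lt. intros [a b] Ha Hb; unfold trunc; simpl in *.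
    destruct (Nat.ltb_spec a n), (Nat.ltb_spec b n); try lia; reflexivity. }
  pose proof (norm2_le_l2norm2 f N Hf). pose proof (norm2_le_l2norm2 f n Hf).
  rewrite E. destruct (Nat.le_gt_cases N n) as [HN|HN].
  - rewrite Hin by exact HN. lra.
  - pose proof (norm2_le_mono n N (trunc n n f) ltac:(lia)). rewrite Hin in * by lia. lra.
Qed.

Lemma l2conv_trunc f : l2 f -> l2conv (fun n => trunc n n f) f.
Proof.
  intros Hf eps Heps.
  destruct (proj1 (is_lim_seq_Reals _ _) (is_lim_seq_norm2 f Hf) eps Heps) as [K HK].
  exists K. intros n N Hn. specialize (HK n Hn). unfold R_dist in HK.
  rewrite (rsq_ext N _ (fun p => Csqmod (vsub (trunc n n f) f p))) by (intros; apply Cmod_pow2).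
  pose proof (norm2_trunc_sub_le n N f Hf). pose proof (norm2_le_l2norm2 f n Hf).
  unfold norm2 in *. rewrite Rabs_left1 in HK; lra.
Qed.

Section FiniteSupport.

Variable V : vec -> Prop.
Hypothesis HV : closed_subspace V.
Hypothesis Hbasis : forall m, V (basis m).

Lemma closed_subspace_row_trunc K J f : V (row_trunc K J f).
Proof.
  induction J as [|J IH].
  - replace (row_trunc K 0 f) with zero_vec; [apply HV|].
    apply functional_extensionality; intros [a b]; unfold row_trunc; simpl.
    destruct (Nat.eqb a K); reflexivity.
  - replace (row_trunc K (S J) f) with (vlin 1 (row_trunc K J f) (f (K, J)) (basis (K, J))).
    { apply closed_subspace_vlin; auto. }
    apply functional_extensionality; intros p; unfold vlin, row_trunc.
    destruct (index_eq_dec p (K, J)) as [->|Hp]; simpl.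
    + rewrite basis_same, Nat.eqb_refl, Nat.ltb_irrefl.
      destruct (Nat.ltb_spec J (S J)); [simpl; ring | lia].
    + rewrite basis_other by exact Hp. destruct p as [a b]; simpl.
      destruct (Nat.eqb_spec a K) as [->|]; simpl; [|ring].
      destruct (Nat.ltb_spec b J), (Nat.ltb_spec b (S J)); simpl; try lia; try ring.
      assert (b = J) by lia; subst; contradiction.
Qed.

Lemma closed_subspace_trunc K J f : V (trunc K J f).
Proof.
  induction K as [|K IH].
  - replace (trunc 0 J f) with zero_vec; [apply HV|].
    apply functional_extensionality; intros [a b]; reflexivity.
  - replace (trunc (S K) J f) with (vlin 1 (trunc K J f) 1 (row_trunc K J f));
      [apply closed_subspace_vlin, closed_subspace_row_trunc; auto|].
    apply functional_extensionality; intros [a b]; unfold vlin, trunc, row_trunc; simpl.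
    destruct (Nat.ltb_spec a K), (Nat.ltb_spec a (S K)), (Nat.eqb_spec a K), (Nat.ltb_spec b J);
      simpl; try lia; ring.
Qed.

Lemma closed_subspace_all_l2 f : l2 f -> V f.
Proof.
  intros Hf. destruct HV as (_ & _ & _ & _ & Hclosed).
  apply (Hclosed (fun n => trunc n n f)); [intros; apply closed_subspace_trunc | exact Hf |].
  apply l2conv_trunc, Hf.
Qed.

End FiniteSupport.

(** [tau1] and [tau2] map [e_m] to [e_(idx1 m)] and [e_(idx2 m)].  The qualified
    [Defs.sigma] avoids the [sigma] of the Reals library. *)
Definition idx1 (m : nat * nat) : nat * nat := sigma_inv (S (fst m), snd m).
Definition idx2 (m : nat * nat) : nat * nat := (fst (Defs.sigma m), S (snd (Defs.sigma m))).

Lemma idx1_bottom a : idx1 (S a, 0%nat) = (a, 0%nat).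
Proof. unfold idx1; simpl. f_equal; lia. Qed.

Lemma idx1_origin : idx1 (0%nat, 0%nat) = (0%nat, 1%nat).
Proof. reflexivity. Qed.

Lemma idx2_column k : idx2 (0%nat, S (S k)) = (0%nat, S k).
Proof. unfold idx2; simpl. f_equal; lia. Qed.

Lemma idx2_01 : idx2 (0%nat, 1%nat) = (1%nat, 1%nat).
Proof. reflexivity. Qed.

Lemma idx2_idx1 a b : idx2 (idx1 (a, b)) = (S a, S b).
Proof. unfold idx2, idx1. rewrite sigma_invK. reflexivity. Qed.

Lemma idx2_inj m n : idx2 m = idx2 n -> m = n.
Proof.
  unfold idx2. intros H. injection H as H1 H2.
  rewrite <- (sigmaK m), <- (sigmaK n). f_equal.
  rewrite (surjective_pairing (Defs.sigma m)), (surjective_pairing (Defs.sigma n)). congruence.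
Qed.

Lemma fst_idx2_ge m : (fst m <= fst (idx2 m))%nat.
Proof.
  destruct m as [a b]. unfold idx2, Defs.sigma.
  destruct (Nat.leb b a); [|destruct (Nat.eqb (a + 1) b)]; simpl; lia.
Qed.

Lemma idx2_interior c d : exists x y, idx2 (S c, S d) = (S x, S y).
Proof.
  exists (pred (fst (idx2 (S c, S d)))), (snd (Defs.sigma (S c, S d))).
  pose proof (fst_idx2_ge (S c, S d)). unfold idx2 in *; simpl in *. f_equal; lia.
Qed.

Lemma idx2_surj n : (1 <= snd n)%nat -> exists n', idx2 n' = n.
Proof.
  intros H. exists (sigma_inv (fst n, pred (snd n))). unfold idx2. rewrite sigma_invK.
  destruct n as [a [|b]]; simpl in *; [lia | reflexivity].
Qed.

Lemma idx1_surj n : (forall k, n <> (0%nat, S (S k))) -> exists n', idx1 n' = n.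
Proof.
  intros H. exists (pred (fst (Defs.sigma n)), snd (Defs.sigma n)). unfold idx1; cbn [fst snd].
  replace (S (pred (fst (Defs.sigma n)))) with (fst (Defs.sigma n)).
  - rewrite <- surjective_pairing. apply sigmaK.
  - destruct n as [a b]. unfold Defs.sigma.
    destruct (Nat.leb_spec b a); [simpl; lia|].
    destruct (Nat.eqb_spec (a + 1) b); [simpl; lia|]. simpl.
    destruct a; [|lia]. destruct b as [|[|b]]; try lia. exfalso; apply (H b); reflexivity.
Qed.

Section OffDiagonal.

Variable Q : nat * nat -> nat * nat -> Prop.
Hypothesis Q_idx1 : forall m n, Q (idx1 m) (idx1 n) <-> Q m n.
Hypothesis Q_idx2 : forall m n, Q (idx2 m) (idx2 n) <-> Q m n.
Hypothesis Q_sym : forall m n, Q m n -> Q n m.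
Hypothesis Q_idx2_bottom : forall m a, Q (idx2 m) (a, 0%nat).
Hypothesis Q_idx1_column : forall m k, Q (idx1 m) (0%nat, S (S k)).

Let Q_bottom_l n a : (1 <= snd n)%nat -> Q n (a, 0%nat).
Proof. intros H. destruct (idx2_surj n H) as [n' <-]. apply Q_idx2_bottom. Qed.

Let Q_column_l n k : (forall j, n <> (0%nat, S (S j))) -> Q n (0%nat, S (S k)).
Proof. intros H. destruct (idx1_surj n H) as [n' <-]. apply Q_idx1_column. Qed.

Lemma off_diagonal_bottom_row a c : a <> c -> Q (a, 0%nat) (c, 0%nat).
Proof.
  revert c; induction a as [|a IH]; intros [|c] Hac; try contradiction.
  - apply Q_idx1. rewrite idx1_origin, idx1_bottom. apply Q_bottom_l; simpl; lia.
  - apply Q_sym, Q_idx1. rewrite idx1_origin, idx1_bottom. apply Q_bottom_l; simpl; lia.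
  - apply Q_idx1. rewrite !idx1_bottom. apply IH. congruence.
Qed.

Lemma off_diagonal_bottom a n : (a, 0%nat) <> n -> Q (a, 0%nat) n.
Proof.
  destruct n as [c [|d]]; intros H.
  - apply off_diagonal_bottom_row. congruence.
  - apply Q_sym, Q_bottom_l; simpl; lia.
Qed.

Lemma off_diagonal_left_column k j : k <> j -> Q (0%nat, S (S k)) (0%nat, S (S j)).
Proof.
  revert j; induction k as [|k IH]; intros [|j] Hkj; try contradiction;
    apply Q_idx2; rewrite !idx2_column.
  - apply Q_column_l. congruence.
  - apply Q_sym, Q_column_l. congruence.
  - apply IH. congruence.
Qed.

Lemma off_diagonal_01 n : (0%nat, 1%nat) <> n -> Q (0%nat, 1%nat) n.
Proof.
  intros H. destruct n as [[|c] [|d]].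
  - apply Q_sym, off_diagonal_bottom. congruence.
  - destruct d as [|d]; [contradiction|]. apply Q_column_l. congruence.
  - apply Q_sym, off_diagonal_bottom. congruence.
  - destruct (idx2_interior c d) as [x [y E]].
    apply Q_idx2. rewrite idx2_01, E, <- (idx2_idx1 0 0), <- (idx2_idx1 x y).
    apply Q_idx2, Q_idx1, off_diagonal_bottom. intros [= <- <-].
    rewrite <- idx2_01 in E. apply idx2_inj in E. discriminate E.
Qed.

Lemma off_diagonal_boundary m n : m <> n -> (fst m = 0 \/ snd m = 0)%nat -> Q m n.
Proof.
  destruct m as [a b]; simpl; intros Hmn [-> | ->]; [|apply off_diagonal_bottom, Hmn].
  destruct b as [|[|k]]; [apply off_diagonal_bottom, Hmn | apply off_diagonal_01, Hmn |].
  destruct n as [c [|d]]; [apply Q_sym, off_diagonal_bottom; congruence|].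
  destruct (classic (exists j, (c, S d) = (0%nat, S (S j)))) as [[j Ej] | Hn].
  - rewrite Ej in *. apply off_diagonal_left_column. congruence.
  - apply Q_sym, Q_column_l. intros j Ej; apply Hn; eauto.
Qed.

Lemma off_diagonal m n : m <> n -> Q m n.
Proof.
  remember (fst m) as K eqn:HK. revert m n HK; induction K as [|K IH]; intros m n HK Hmn.
  - apply off_diagonal_boundary; auto.
  - destruct m as [a [|b]]; [apply off_diagonal_boundary; simpl; auto|]. simpl in HK; subst a.
    destruct n as [[|c] [|d]]; try (apply Q_sym, off_diagonal_boundary; simpl; auto; congruence).
    rewrite <- (idx2_idx1 K b), <- (idx2_idx1 c d). apply Q_idx2, Q_idx1.
    apply IH; [reflexivity | congruence].
Qed.

End OffDiagonal.

Lemma idx_invariant_const {T : Type} (c : nat * nat -> T) :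
  (forall m, c (idx1 m) = c m) -> (forall m, c (idx2 m) = c m) ->
  forall m, c m = c (0%nat, 0%nat).
Proof.
  intros H1 H2.
  assert (Hbottom : forall a, c (a, 0%nat) = c (0%nat, 0%nat)).
  { induction a as [|a IH]; [reflexivity|]. rewrite <- IH, <- (idx1_bottom a). symmetry; apply H1. }
  assert (Hcolumn : forall k, c (0%nat, S k) = c (0%nat, 0%nat)).
  { induction k as [|k IH].
    - rewrite <- idx1_origin. apply H1.
    - rewrite <- IH, <- (idx2_column k). symmetry; apply H2. }
  intros [a b]. revert b; induction a as [|a IH]; intros [|b]; auto.
  rewrite <- (IH b), <- idx2_idx1, H2, H1. reflexivity.
Qed.

Lemma tau1_idx1 f n : tau1 f (idx1 n) = f n.
Proof. unfold tau1, Uadj, idx1. rewrite sigma_invK. destruct n; reflexivity. Qed.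

Lemma tau2_idx2 f n : tau2 f (idx2 n) = f n.
Proof. unfold tau2, Mz2, Uop, idx2. rewrite <- surjective_pairing, sigmaK. reflexivity. Qed.

Lemma tau1_column f k : tau1 f (0%nat, S (S k)) = 0%C.
Proof. reflexivity. Qed.

Lemma tau2_bottom f a : tau2 f (a, 0%nat) = 0%C.
Proof. reflexivity. Qed.

Lemma tau1_vsub f g : tau1 (vsub f g) = vsub (tau1 f) (tau1 g).
Proof.
  apply functional_extensionality; intros q. unfold tau1, Uadj, Mz1, vsub.
  destruct (Defs.sigma q) as [[|a] b]; [ring | reflexivity].
Qed.

Lemma tau2_vsub f g : tau2 (vsub f g) = vsub (tau2 f) (tau2 g).
Proof.
  apply functional_extensionality; intros [a [|b]]; unfold tau2, Mz2, Uop, vsub; [ring | reflexivity].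
Qed.

Lemma sigma_eq_idx1 q m : Defs.sigma q = (S (fst m), snd m) <-> q = idx1 m.
Proof.
  split; intros H.
  - rewrite <- (sigmaK q), H. reflexivity.
  - subst q. apply sigma_invK.
Qed.

Lemma tau1_basis m : tau1 (basis m) = basis (idx1 m).
Proof.
  apply functional_extensionality; intros q. unfold tau1, Uadj, Mz1.
  destruct (Defs.sigma q) as [[|a] b] eqn:Eq.
  - rewrite basis_other; [reflexivity|]. intros Hq. apply sigma_eq_idx1 in Hq. congruence.
  - unfold basis. destruct (index_eq_dec (a, b) m) as [Hm|Hm], (index_eq_dec q (idx1 m)) as [Hq|Hq].
    + reflexivity.
    + exfalso; apply Hq, sigma_eq_idx1. subst m; assumption.
    + exfalso; apply Hm. apply sigma_eq_idx1 in Hq. rewrite Eq in Hq.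
      destruct m; simpl in Hq; congruence.
    + reflexivity.
Qed.

Lemma tau2_basis m : tau2 (basis m) = basis (idx2 m).
Proof.
  apply functional_extensionality; intros [a [|b]].
  - rewrite tau2_bottom, basis_other; [reflexivity|]. unfold idx2; congruence.
  - unfold tau2, Mz2, Uop, basis, idx2.
    destruct (index_eq_dec (sigma_inv (a, b)) m) as [Hm|Hm],
             (index_eq_dec (a, S b) (fst (Defs.sigma m), S (snd (Defs.sigma m)))) as [Hq|Hq].
    + reflexivity.
    + exfalso; apply Hq. subst m. rewrite sigma_invK. reflexivity.
    + exfalso; apply Hm. injection Hq as -> ->. rewrite <- surjective_pairing. apply sigmaK.
    + reflexivity.
Qed.

(** * Joint reducing subspaces *)

Section ReducingSubspace.

Variable V : vec -> Prop.
Hypothesis HV : closed_subspace V.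
Hypothesis HV1 : reduces tau1 V.
Hypothesis HV2 : reduces tau2 V.

Let P (m : nat * nat) : vec := proj V (basis m).

Let P_spec m : V (P m) /\ ortho_compl V (vsub (basis m) (P m)).
Proof. apply proj_spec; [exact HV | apply l2_basis]. Qed.

Lemma proj_basis_idx1 m : P (idx1 m) = tau1 (P m).
Proof.
  unfold P. rewrite <- tau1_basis.
  apply proj_comm_reducing; [exact HV | exact HV1 | apply tau1_vsub | apply l2_basis |].
  rewrite tau1_basis; apply l2_basis.
Qed.

Lemma proj_basis_idx2 m : P (idx2 m) = tau2 (P m).
Proof.
  unfold P. rewrite <- tau2_basis.
  apply proj_comm_reducing; [exact HV | exact HV2 | apply tau2_vsub | apply l2_basis |].
  rewrite tau2_basis; apply l2_basis.
Qed.

(** [P m n = <P e_m, e_n>] is a hermitian matrix. *)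
Lemma proj_basis_conj m n : fst (P m n) = fst (P n m) /\ snd (P m n) = - snd (P n m).
Proof.
  destruct (orth_basis_sub (P m) (P n) n (proj2 (proj2 (P_spec n)) _ (proj1 (P_spec m))))
    as [Lre Lim].
  destruct (orth_basis_sub (P n) (P m) m (proj2 (proj2 (P_spec m)) _ (proj1 (P_spec n))))
    as [Lre' Lim'].
  split.
  - apply (is_lim_seq_unique_real _ _ _ Lre).
    apply (is_lim_seq_ext _ _ _ (fun N => re_ip_comm N (P n) (P m)) Lre').
  - apply (is_lim_seq_unique_real _ _ _ Lim).
    apply (is_lim_seq_ext _ _ _ (fun N => eq_sym (im_ip_comm N (P m) (P n)))).
    exact (proj1 (is_lim_seq_opp _ (Finite _)) Lim').
Qed.

Lemma proj_basis_off_diagonal m n : m <> n -> P m n = 0%C.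
Proof.
  apply (off_diagonal (fun m n => P m n = 0%C)).
  - intros a b. rewrite proj_basis_idx1, tau1_idx1. reflexivity.
  - intros a b. rewrite proj_basis_idx2, tau2_idx2. reflexivity.
  - intros a b Hab. destruct (proj_basis_conj a b) as [E1 E2]. rewrite Hab in E1, E2.
    apply injective_projections; simpl in *; lra.
  - intros a k. rewrite proj_basis_idx2. apply tau2_bottom.
  - intros a k. rewrite proj_basis_idx1. apply tau1_column.
Qed.

Lemma proj_basis_scaled m : P m = vscal (P (0%nat, 0%nat) (0%nat, 0%nat)) (basis m).
Proof.
  assert (Hdiag : P m m = P (0%nat, 0%nat) (0%nat, 0%nat)).
  { apply (idx_invariant_const (fun m => P m m)); intros a.
    - rewrite proj_basis_idx1; apply tau1_idx1.
    - rewrite proj_basis_idx2; apply tau2_idx2. }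
  rewrite <- Hdiag. apply functional_extensionality; intros p. unfold vscal.
  destruct (index_eq_dec p m) as [->|Hp].
  - rewrite basis_same; ring.
  - rewrite basis_other, proj_basis_off_diagonal by congruence; ring.
Qed.

Lemma proj_basis_trivial : (forall m, P m = zero_vec) \/ (forall m, P m = basis m).
Proof.
  set (c := P (0%nat, 0%nat) (0%nat, 0%nat)).
  assert (Hc : c = 0%C \/ c = 1%C).
  { apply (orth_scaled_basis c (0%nat, 0%nat)). rewrite <- proj_basis_scaled.
    apply (proj2 (P_spec _)), P_spec. }
  destruct Hc as [Hc|Hc]; [left | right]; intros m; rewrite proj_basis_scaled; fold c; rewrite Hc;
    apply functional_extensionality; intros p; unfold vscal, zero_vec; ring.
Qed.

End ReducingSubspace.

Theorem lemma3p9 :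
  forall S : vec -> Prop,
    closed_subspace S -> reduces tau1 S -> reduces tau2 S ->
    (forall f, S f -> f = zero_vec) \/ (forall f, l2 f -> S f).
Proof.
  intros S HS H1 H2.
  destruct (proj_basis_trivial S HS H1 H2) as [Hzero | Hone]; [left | right].
  - intros f Hf. apply functional_extensionality; intros m. apply orth_basis.
    destruct (proj_spec S HS (basis m) (l2_basis m)) as [_ [_ Horth]].
    rewrite Hzero in Horth.
    replace (basis m) with (vsub (basis m) zero_vec)
      by (apply functional_extensionality; intros p; unfold vsub, zero_vec; ring).
    apply Horth, Hf.
  - apply closed_subspace_all_l2; [exact HS|]. intros m. rewrite <- Hone.
    apply proj_spec; [exact HS | apply l2_basis].
Qed.
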